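(* For all $m,n\ge 0$, the subgroup $\mathrm{GL}(m)\times\mathrm{GL}(n)\subset\mathrm{GL}(m+n)$ is parabolically connected; equivalently, for any decomposition $V=U\oplus W$ with $\dim U=m$, $\dim W=n$ and any full flag $V_\bullet$ in $V$, the group $(\mathrm{GL}(U)\times\mathrm{GL}(W))\cap\mathrm{Stab}(V_\bullet)$ is connected.
   Context: All groups are over $\mathbb{C}$ with the Zariski topology. $\mathrm{GL}(m)\times\mathrm{GL}(n)$ is embedded in $\mathrm{GL}(m+n)$ as block-diagonal matrices (equivalently $\mathrm{GL}(U)\times\mathrm{GL}(W)\subset\mathrm{GL}(U\oplus W)$). A closed subgroup $H$ of a reductive group $G$ is parabolically connected if $P\cap H$ is connected for every parabolic subgroup $P\subseteq G$. A full flag is a chain $0\subset V_1\subset\dots\subset V_{m+n}=V$ with $\dim V_i=i$; $\mathrm{Stab}(V_\bullet)$ is the subgroup of $\mathrm{GL}(V)$ preserving every $V_i$. *)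

From HB Require Import structures.
From mathcomp Require Import all_boot all_order all_algebra.
Set Implicit Arguments. Unset Strict Implicit. Unset Printing Implicit Defensive.
Import Order.TTheory GRing.Theory Num.Theory.
Local Open Scope ring_scope.

Inductive mxpolyfun (F : fieldType) (N : nat) : ('M[F]_N -> F) -> Prop :=
  | mxpf_const (c : F) : mxpolyfun (fun _ => c)
  | mxpf_coord (i j : 'I_N) : mxpolyfun (fun A => A i j)
  | mxpf_add f g : mxpolyfun f -> mxpolyfun g -> mxpolyfun (fun A => f A + g A)
  | mxpf_mul f g : mxpolyfun f -> mxpolyfun g -> mxpolyfun (fun A => f A * g A).

Definition zariski_closed (F : fieldType) (N : nat) (Z : 'M[F]_N -> Prop) :=
  exists P : ('M[F]_N -> F) -> Prop,
    (forall f, P f -> mxpolyfun f) /\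
    (forall A, Z A <-> (forall f, P f -> f A = 0)).

(* Since GL_N is open in M_N, the subspace topology
   from M_N agrees with the Zariski topology of GL_N. *)
Definition zariski_connected (F : fieldType) (N : nat) (S : 'M[F]_N -> Prop) :=
  ~ exists Z1 Z2 : 'M[F]_N -> Prop,
      [/\ zariski_closed Z1, zariski_closed Z2,
          (forall A, S A -> Z1 A \/ Z2 A),
          (forall A, S A -> Z1 A -> Z2 A -> False) &
          ((exists A, S A /\ Z1 A) /\ (exists A, S A /\ Z2 A))].

(* Row vectors, acted on by right multiplication: g preserves the subspace
   (row space of) X iff X *m g <= X. *)
Definition preserves (F : fieldType) (N : nat) (g X : 'M[F]_N) : bool :=
  (X *m g <= X)%MS.

Definition full_flag (F : fieldType) (N : nat) (Vs : 'I_N.+1 -> 'M[F]_N) :=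
  (forall i : 'I_N.+1, \rank (Vs i) = i) /\
  (forall i j : 'I_N.+1, (i <= j)%N -> (Vs i <= Vs j)%MS).

Definition GLUW_cap_stab (F : fieldType) (N : nat) (U W : 'M[F]_N)
    (Vs : 'I_N.+1 -> 'M[F]_N) (g : 'M[F]_N) : Prop :=
  [/\ g \in unitmx, preserves g U, preserves g W &
      forall i, preserves g (Vs i)].

From HB Require Import structures.
From mathcomp Require Import all_boot all_order all_algebra.
From Stdlib Require Import Classical.
Set Implicit Arguments. Unset Strict Implicit. Unset Printing Implicit Defensive.
Import Order.TTheory GRing.Theory Num.Theory.
Local Open Scope ring_scope.

(* The group G = (GL(U) x GL(W)) ∩ Stab(V_.) is the set of invertible
   matrices in the intersection of stabilizer algebras, which is a linear
   subspace L of M_N(F).  Hence G = L ∩ GL_N is "line-connected": for any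
   A, B in G, every point of the affine line t |-> A + t (B - A) at which the
   determinant does not vanish lies in G again.  Along such a line, every
   polynomial function of the entries becomes a polynomial in t, so a closed
   set missing B meets the line in finitely many parameters, and so does the
   locus where the determinant vanishes (it misses A).  Since F is infinite,
   given a disconnection (Z1, Z2) of G with A in Z1 \ Z2 and B in Z2 \ Z1 we
   find a parameter t avoiding all three finite sets; the point of the line at
   t lies in G but neither in Z1 nor in Z2, a contradiction. *)

Section AffineLine.
Variables (F : fieldType) (N : nat) (A B : 'M[F]_N).

Definition mx_line (t : F) : 'M[F]_N := A + t *: (B - A).

Definition mx_line_poly : 'M[{poly F}]_N :=
  map_mx polyC A + 'X *: map_mx polyC (B - A).

Lemma mx_line_polyE t : map_mx (horner_eval t) mx_line_poly = mx_line t.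
Proof.
apply/matrixP => i j; rewrite !mxE /= /horner_eval.
by rewrite hornerD hornerM hornerX !hornerC.
Qed.

Lemma mx_line0 : mx_line 0 = A.
Proof. by rewrite /mx_line scale0r addr0. Qed.

Lemma mx_line1 : mx_line 1 = B.
Proof. by rewrite /mx_line scale1r addrC subrK. Qed.

Lemma mxpolyfun_on_line f :
  mxpolyfun f -> exists q : {poly F}, forall t, f (mx_line t) = q.[t].
Proof.
elim=> [c | i j | f1 g1 _ [q1 e1] _ [q2 e2] | f1 g1 _ [q1 e1] _ [q2 e2]].
- by exists c%:P => t; rewrite hornerC.
- exists (mx_line_poly i j) => t.
  by rewrite -mx_line_polyE mxE.
- by exists (q1 + q2) => t; rewrite hornerD e1 e2.
- by exists (q1 * q2) => t; rewrite hornerM e1 e2.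
Qed.

Lemma det_on_line t : \det (mx_line t) = (\det mx_line_poly).[t].
Proof. by rewrite -mx_line_polyE det_map_mx. Qed.

Lemma det_line_poly_neq0 : A \in unitmx -> \det mx_line_poly != 0.
Proof.
rewrite unitmxE unitfE -mx_line0 det_on_line.
by apply: contraNneq => ->; rewrite horner0.
Qed.

Lemma closed_on_line (Z : 'M[F]_N -> Prop) s :
  zariski_closed Z -> ~ Z (mx_line s) ->
  exists2 q : {poly F}, q != 0 & forall t, Z (mx_line t) -> q.[t] = 0.
Proof.
move=> [P [polyP eqZ]] notZs.
have [f [Pf fs]] : exists f, P f /\ f (mx_line s) <> 0.
  apply: NNPP => noP; apply/notZs/eqZ => f Pf.
  by apply: NNPP => fs; apply: noP; exists f.
have [q eq_q] := @mxpolyfun_on_line f (polyP f Pf).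
exists q => [|t /eqZ/(_ f Pf)]; last by rewrite eq_q.
by apply: contra_notN fs => /eqP q0; rewrite eq_q q0 horner0.
Qed.

Lemma preserves_on_line (X : 'M[F]_N) t :
  preserves A X -> preserves B X -> preserves (mx_line t) X.
Proof.
rewrite /preserves /mx_line => stA stB.
rewrite mulmxDr -scalemxAr; apply: addmx_sub => //.
by apply: scalemx_sub; apply: stablemxD => //; rewrite stablemxN.
Qed.

End AffineLine.

(* A field of characteristic zero is infinite: a nonzero polynomial has a
   non-root (among 0, 1, ..., deg). *)
Lemma exists_nonroot (F : numDomainType) (r : {poly F}) :
  r != 0 -> exists t, ~~ root r t.
Proof.
move=> r0; apply: NNPP => noNonroot.
pose s := mkseq (fun i => (i%:R : F)) (size r).
have roots_s : all (root r) s.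
  by apply/allP => x _; apply/negPn/negP => nr; apply: noNonroot; exists x.
have uniq_s : uniq s.
  by apply: mkseq_uniq => a b /eqP; rewrite eqr_nat => /eqP.
by have := max_poly_roots r0 roots_s uniq_s; rewrite size_mkseq ltnn.
Qed.

Lemma line_connected_zariski_connected (F : numFieldType) (N : nat)
    (S : 'M[F]_N -> Prop) :
  (forall A, S A -> A \in unitmx) ->
  (forall A B t, S A -> S B -> mx_line A B t \in unitmx -> S (mx_line A B t)) ->
  zariski_connected S.
Proof.
move=> S_unit S_line [Z1 [Z2 [cl1 cl2 cover disj [[A [SA Z1A]] [B [SB Z2B]]]]]].
have notZ2A : ~ Z2 (mx_line A B 0) by rewrite mx_line0 => /(disj A SA Z1A).
have notZ1B : ~ Z1 (mx_line A B 1).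
  by rewrite mx_line1 => Z1B; apply: (disj B SB Z1B Z2B).
have [q1 q1n Z1q1] := closed_on_line cl1 notZ1B.
have [q2 q2n Z2q2] := closed_on_line cl2 notZ2A.
have detn := det_line_poly_neq0 B (S_unit A SA).
have [t] := exists_nonroot (mulf_neq0 (mulf_neq0 q1n q2n) detn).
rewrite rootE !hornerM !mulf_eq0 !negb_or => /andP[/andP[q1t q2t] dett].
have St : S (mx_line A B t).
  by apply: S_line => //; rewrite unitmxE unitfE det_on_line.
by case: (cover _ St) => [/Z1q1|/Z2q2] /eqP; apply/negP.
Qed.

Theorem proposition1 (F : numClosedFieldType) (m n : nat)
    (U W : 'M[F]_(m + n)) (Vs : 'I_(m + n).+1 -> 'M[F]_(m + n)) :
  \rank U = m -> \rank W = n -> (U :&: W == (0 : 'M[F]_(m + n)))%MS ->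
  full_flag Vs ->
  zariski_connected (GLUW_cap_stab U W Vs).
Proof.
move=> _ _ _ _; apply: line_connected_zariski_connected => [A [] // | A B t].
move=> [_ UA WA VsA] [_ UB WB VsB] unit_t.
by split=> [//|||i]; apply: preserves_on_line.
Qed.
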